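(* Let $G$ be a $\mathbb{P}$-generic filter over a ground model $V$, and let $(G_k)_{k\in\omega}\in\prod_{k\in\omega}\mathbb{C}_k$ be the generic sequence, i.e. the unique function $g$ on $\omega$ with $g\restriction m\in T$ for all $T\in G$ and $m\in\omega$, $G_k=g(k)$. Then in $V[G]$, $V\cap[0,1]^n\subset\bigcap_{m\in\omega}\bigcup_{k\ge m}G_k$; that is, every point of $[0,1]^n$ lying in $V$ belongs to $G_k$ for infinitely many $k$.
   Context: Fix a positive integer $n$ and real $0<r<n$. For each $k\in\omega$ fix $M_k\in\omega$ with $2^k(\sqrt{n}/M_k)^r<2^{-k}$. $C_k$ is the set of cubes $[\frac{j_0}{M_k},\frac{j_0+1}{M_k}]\times\cdots\times[\frac{j_{n-1}}{M_k},\frac{j_{n-1}+1}{M_k}]$ with $j_i\in\{0,\dots,M_k-1\}$; $\mathbb{C}_k$ is the set of unions of $2^k$ (not necessarily distinct) elements of $C_k$. Norm $\nu$ on $X\subset\mathbb{C}_k$: $\nu(X)\ge0$ always; $\nu(X)\ge1$ iff $\bigcup X=[0,1]^n$; for $j\ge1$, $\nu(X)\ge j+1$ iff for every partition $X=X_0\cup X_1$ some $\nu(X_i)\ge j$; $\nu(X)$ is the largest such $j$. Finite sequences are functions on natural numbers $m=\{0,\dots,m-1\}$, $|t|$ is the length; a tree is a set of finite sequences closed under initial segments; $\mathrm{succ}_T(t)$ is the set of immediate successors of $t$ in $T$, with $\nu(\mathrm{succ}_T(t)):=\nu(\{s(|t|):s\in\mathrm{succ}_T(t)\})$; a branching node is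 $t$ with $|\mathrm{succ}_T(t)|>1$. $\mathbb{P}$ consists of all $T$ with: (1) $T$ a nonempty tree; (2) $t(k)\in\mathbb{C}_k$ for $t\in T$, $k<|t|$; (3) $\mathrm{succ}_T(t)\neq\emptyset$ for all $t\in T$; (4) every node has a branching extension in $T$; (5) for each $K\in\omega$ only finitely many branching nodes $t$ have $\nu(\mathrm{succ}_T(t))\le K$. Ordered by inclusion. *)

From Stdlib Require Import Reals Lra Lia List.
Import ListNotations.
Open Scope R_scope.

(* Points of R^n are represented as functions nat -> R; only coordinates
   i < n are ever inspected. *)
Definition point := nat -> R.
Definition pset := point -> Prop.

Definition in_unit_cube (n : nat) (x : point) : Prop :=
  forall i, (i < n)%nat -> 0 <= x i <= 1.

Definition cube (n M : nat) (j : nat -> nat) : pset :=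
  fun x => forall i, (i < n)%nat ->
    INR (j i) / INR M <= x i <= (INR (j i) + 1) / INR M.

Definition in_Ck (n : nat) (M : nat -> nat) (k : nat) (c : pset) : Prop :=
  exists j : nat -> nat, (forall i, (i < n)%nat -> (j i < M k)%nat) /\ c = cube n (M k) j.

(* U is an element of the blackboard-C_k: a union of 2^k (not necessarily
   distinct) elements of C_k *)
Definition in_CCk (n : nat) (M : nat -> nat) (k : nat) (U : pset) : Prop :=
  exists f : nat -> pset,
    (forall l, (l < 2 ^ k)%nat -> in_Ck n M k (f l)) /\
    U = (fun x => exists l, (l < 2 ^ k)%nat /\ f l x).

(* norm_ge n X j  <->  nu(X) >= j *)
Fixpoint norm_ge (n : nat) (X : pset -> Prop) (j : nat) : Prop :=
  match j with
  | O => True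
  | S O => forall x, (exists c, X c /\ c x) <-> in_unit_cube n x
  | S (S j' as j1) =>
      forall X0 X1 : pset -> Prop,
        (forall c, X c <-> (X0 c \/ X1 c)) ->
        (forall c, ~ (X0 c /\ X1 c)) ->
        norm_ge n X0 j1 \/ norm_ge n X1 j1
  end.

Definition tree := list pset -> Prop.

Definition succset (T : tree) (t : list pset) : pset -> Prop :=
  fun c => T (t ++ [c]).

Definition branching (T : tree) (t : list pset) : Prop :=
  exists c1 c2, c1 <> c2 /\ T (t ++ [c1]) /\ T (t ++ [c2]).

Definition default_pset : pset := fun _ => False.

Definition inP (n : nat) (M : nat -> nat) (T : tree) : Prop :=
  (exists t, T t) /\
  (forall t m, T t -> T (firstn m t)) /\
  (forall t k, T t -> (k < length t)%nat -> in_CCk n M k (nth k t default_pset)) /\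
  (forall t, T t -> exists c, T (t ++ [c])) /\
  (forall t, T t -> exists u, T (t ++ u) /\ branching T (t ++ u)) /\
  (* (5) for each K only finitely many branching nodes have nu(succ) <= K *)
  (forall K : nat, exists L : list (list pset),
     forall t, T t -> branching T t -> ~ norm_ge n (succset T t) (S K) -> In t L).

(* Condition (5) for K = 0 says that all but finitely many branching nodes t of a
   condition T have nu(succ_T(t)) >= 1, i.e. their successors cover [0,1]^n.
   Extend a given node to such a branching node s of length >= m, choose a
   successor s ++ [c] with x in c, and shrink T to the nodes comparable with
   s ++ [c].  This is again a condition, and every branch through it takes the
   value c at level |s|. *)
From Stdlib Require Import Reals List Lia Classical.
Import ListNotations.
Open Scope R_scope.

Section ListPrefix.

Context {A : Type}.

Definition prefix (a b : list A) : Prop := exists p, b = a ++ p.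

Definition comparable (a b : list A) : Prop := prefix a b \/ prefix b a.

Lemma prefix_refl (a : list A) : prefix a a.
Proof. exists []; now rewrite app_nil_r. Qed.

Lemma prefix_app (a b p : list A) : prefix a b -> prefix a (b ++ p).
Proof. intros [q ->]; exists (q ++ p); now rewrite app_assoc. Qed.

Lemma comparable_nth (a b : list A) (i : nat) (d : A) :
  comparable a b -> (i < length a)%nat -> (i < length b)%nat ->
  nth i a d = nth i b d.
Proof. intros [[p ->]|[p ->]] Ha Hb; now rewrite app_nth1. Qed.

Lemma comparable_firstn (t w : list A) (k : nat) :
  comparable t w -> comparable (firstn k t) w.
Proof.
  intros [[p ->]|[p ->]].
  - left; exists (skipn k t ++ p); now rewrite app_assoc, firstn_skipn.
  - rewrite firstn_app; destruct (Compare_dec.le_lt_dec k (length w)).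
    + replace (k - length w)%nat with 0%nat by lia; rewrite app_nil_r.
      left; exists (skipn k w); now rewrite firstn_skipn.
    + rewrite firstn_all2 by lia; right; now exists (firstn (k - length w) p).
Qed.

Lemma comparable_long_prefix (t w : list A) :
  comparable t w -> (length w <= length t)%nat -> prefix w t.
Proof.
  intros [[p Hp]|Hp] Hlen; [|exact Hp].
  destruct p as [|d p]; [rewrite Hp, app_nil_r; apply prefix_refl|].
  rewrite Hp, length_app in Hlen; simpl in Hlen; lia.
Qed.

Lemma comparable_app_l (t p w : list A) :
  comparable (t ++ p) w -> comparable t w.
Proof.
  intros H; apply (comparable_firstn _ _ (length t)) in H.
  now rewrite firstn_app, Nat.sub_diag, firstn_all, app_nil_r in H.
Qed.

Lemma list_length_bound (L : list (list A)) :
  exists N, forall t, In t L -> (length t < N)%nat.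
Proof.
  induction L as [|a L [N HN]].
  - exists 0%nat; intros t [].
  - exists (N + length a + 1)%nat; intros t [<-|H]; [lia|].
    specialize (HN t H); lia.
Qed.

End ListPrefix.

Definition restrict (T : tree) (w : list pset) : tree :=
  fun t => T t /\ comparable t w.

Lemma norm_ge_ext (n : nat) (X Y : pset -> Prop) (j : nat) :
  (forall c, X c <-> Y c) -> norm_ge n X j -> norm_ge n Y j.
Proof.
  intros Hxy; destruct j as [|[|j]]; simpl; intros H; auto.
  - intros y; rewrite <- (H y).
    split; intros [c [Hc Hcy]]; exists c; split; auto; apply Hxy; auto.
  - intros X0 X1 Hpart Hdisj; apply H; auto.
    intros c; rewrite Hxy; apply Hpart.
Qed.

Section Restriction.

Variables (n : nat) (M : nat -> nat) (T : tree) (w : list pset).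
Hypotheses (HT : inP n M T) (Hw : T w).

Lemma restrict_branching (v : list pset) :
  prefix w v -> branching T v -> branching (restrict T w) v.
Proof.
  intros Hv [c1 [c2 [Hne [Hc1 Hc2]]]]; exists c1, c2.
  repeat split; auto; right; now apply prefix_app.
Qed.

Lemma branching_restrict_prefix (t : list pset) :
  branching (restrict T w) t -> prefix w t.
Proof.
  intros [c1 [c2 [Hne [[_ H1] [_ H2]]]]].
  destruct (Compare_dec.le_lt_dec (length w) (length t)) as [Hle|Hlt].
  - exact (comparable_long_prefix _ _ (comparable_app_l _ _ _ H1) Hle).
  - (* both children would have to agree with w at position |t| *)
    exfalso; apply Hne.
    assert (e1 := comparable_nth _ _ (length t) default_pset H1).
    assert (e2 := comparable_nth _ _ (length t) default_pset H2).
    rewrite length_app, nth_middle in e1, e2; simpl in e1, e2.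
    rewrite e1, e2 by lia; reflexivity.
Qed.

Lemma succset_restrict (t : list pset) (c : pset) :
  prefix w t -> succset (restrict T w) t c <-> succset T t c.
Proof.
  intros Hwt; unfold succset, restrict; split; [tauto|].
  split; auto; right; now apply prefix_app.
Qed.

Lemma restrict_common_extension (t : list pset) :
  restrict T w t -> exists p, T (t ++ p) /\ prefix w (t ++ p).
Proof.
  intros [Ht [[p ->]|Hwt]].
  - exists p; split; [exact Hw|apply prefix_refl].
  - exists []; rewrite app_nil_r; auto.
Qed.

Lemma restrict_succ (t : list pset) :
  restrict T w t -> exists c, restrict T w (t ++ [c]).
Proof.
  destruct HT as [_ [Hclosed [_ [Hsucc _]]]].
  intros [Ht [[[|d p] Hp]|Hwt]].
  - destruct (Hsucc t Ht) as [c Hc]; exists c; split; auto.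
    right; rewrite Hp, app_nil_r; apply prefix_app, prefix_refl.
  - exists d; split.
    + replace (t ++ [d]) with (firstn (length t + 1) w) by
        (rewrite Hp, firstn_app_2; reflexivity).
      now apply Hclosed.
    + left; exists p; now rewrite Hp, <- app_assoc.
  - destruct (Hsucc t Ht) as [c Hc]; exists c; split; auto.
    right; now apply prefix_app.
Qed.

Lemma restrict_inP : inP n M (restrict T w).
Proof.
  destruct HT as [_ [Hclosed [HCC [_ [Hext Hfin]]]]].
  split; [|split; [|split; [|split; [|split]]]].
  - exists w; split; [exact Hw|left; apply prefix_refl].
  - intros t k [Ht Htw]; split; [now apply Hclosed|now apply comparable_firstn].
  - intros t k [Ht _]; now apply HCC.
  - exact restrict_succ.
  - intros t Ht; destruct (restrict_common_extension t Ht) as [p [Hp Hwp]].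
    destruct (Hext _ Hp) as [u [Hu Hb]]; exists (p ++ u).
    rewrite app_assoc; split.
    + split; auto; right; now apply prefix_app.
    + apply restrict_branching; auto; now apply prefix_app.
  - intros K; destruct (Hfin K) as [L HL]; exists L.
    intros t [Ht _] Hb Hnorm.
    assert (Hwt := branching_restrict_prefix t Hb).
    apply HL; auto.
    + destruct Hb as [c1 [c2 [Hne [[H1 _] [H2 _]]]]]; now exists c1, c2.
    + intros HnormT; apply Hnorm; eapply norm_ge_ext; [|exact HnormT].
      intros c; symmetry; now apply succset_restrict.
Qed.

Lemma restrict_nth (t : list pset) (i : nat) :
  restrict T w t -> (i < length t)%nat -> (i < length w)%nat ->
  nth i t default_pset = nth i w default_pset.
Proof. intros [_ Htw]; now apply comparable_nth. Qed.

End Restriction.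

Lemma inP_long_node (n : nat) (M : nat -> nat) (T : tree) :
  inP n M T -> forall N, exists t, T t /\ (N <= length t)%nat.
Proof.
  intros [[t0 Ht0] [_ [_ [Hsucc _]]]] N.
  induction N as [|N [t [Ht Hl]]]; [now exists t0; split; [|lia]|].
  destruct (Hsucc t Ht) as [c Hc]; exists (t ++ [c]); split; auto.
  rewrite length_app; simpl; lia.
Qed.

Lemma inP_long_covering_node (n : nat) (M : nat -> nat) (T : tree) :
  inP n M T -> forall N,
  exists s, T s /\ (N <= length s)%nat /\ norm_ge n (succset T s) 1.
Proof.
  intros HT N.
  pose proof HT as (_ & _ & _ & _ & Hext & Hfin).
  destruct (Hfin 0%nat) as [L HL], (list_length_bound L) as [N' HN'].
  destruct (inP_long_node n M T HT (max N N')) as [t [Ht Hlen]].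
  destruct (Hext t Ht) as [u [Hu Hb]]; exists (t ++ u).
  rewrite length_app; split; [exact Hu|split; [lia|]].
  apply NNPP; intros Hnorm.
  specialize (HN' _ (HL _ Hu Hb Hnorm)); rewrite length_app in HN'; lia.
Qed.

Theorem lemma4p8 (n : nat) (r : R) (M : nat -> nat)
  (Hn : (0 < n)%nat) (Hr0 : 0 < r) (Hrn : r < INR n)
  (HM0 : forall k, (0 < M k)%nat)
  (HM : forall k, 2 ^ k * Rpower (sqrt (INR n) / INR (M k)) r < / 2 ^ k) :
  forall x : point, in_unit_cube n x ->
  forall (m : nat) (T : tree), inP n M T ->
  exists T' : tree, inP n M T' /\ (forall t, T' t -> T t) /\
    exists k : nat, (m <= k)%nat /\
      forall t, T' t -> (k < length t)%nat -> nth k t default_pset x.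
Proof.
  intros x Hx m T HT.
  destruct (inP_long_covering_node n M T HT m) as [s [Hs [Hlen Hcover]]].
  destruct (proj2 (Hcover x) Hx) as [c [Hc Hcx]].
  exists (restrict T (s ++ [c])); split; [now apply restrict_inP|split].
  - now intros t [Ht _].
  - exists (length s); split; [exact Hlen|].
    intros t Ht Hk.
    rewrite (restrict_nth T (s ++ [c]) t (length s) Ht Hk)
      by (rewrite length_app; simpl; lia).
    now rewrite nth_middle.
Qed.
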